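(* Let $\Gamma$ be a strict two-player normal-form game whose preference graph has no sink (no node of out-degree $0$) and no directed cycle of length $4$. Then each player has at least $3$ strategies. Moreover, if both players have exactly $3$ strategies, then the preference graph of $\Gamma$ is isomorphic (as a directed graph; equivalently, equal up to renaming strategies and players) to Shapley's graph. In particular, Shapley's graph is the unique smallest two-player preference graph with neither a sink nor a $4$-cycle.
   Context: A finite normal-form game has players $1,\dots,N$, finite strategy sets $S_1,\dots,S_N$ and utilities $u_i:\prod_j S_j\to\mathbb{R}$. A strategy profile is an element of $Z=\prod_j S_j$; write $(s;p_{-i})$ for the profile obtained from $p$ by replacing player $i$'s strategy with $s$. Two distinct profiles are $i$-comparable if they differ only in the strategy of player $i$. The preference graph has node set $Z$ and, for each pair of $i$-comparable profiles $p,q$, an arc $p\to q$ whenever $u_i(q)\ge u_i(p)$ (so ties produce arcs in both directions). A game is strict if $u_i(p)\neq u_i(q)$ for every player $i$ and every pair of $i$-comparable profiles $p,q$. Shapley's graph is the preference graph of the $3\times 3$ game with rows $r_1,r_2,r_3$ (player 1) and columns $c_1,c_2,c_3$ (player 2) and payoff pairs $(u_1,u_2)$: row $r_1$: $(0,0),(2,1),(1,2)$; row $r_2$: $(1,2),(0,0),(2,1)$; row $r_3$: $(2,1),(1,2),(0,0)$. Explicitly, player 1's preferences are $r_3>r_2>r_1$ against $c_1$, $r_1>r_3>r_2$ against $c_2$, $r_2>r_1>r_3$ against $c_3$; player 2's preferences are $c_3>c_2>c_1$ against $r_1$, $c_1>c_3>c_2$ against $r_2$, $c_2>c_1>c_3$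 against $r_3$ (an arc points to the more preferred profile). *)

From HB Require Import structures.
From mathcomp Require Import all_boot all_order all_algebra.
Set Implicit Arguments. Unset Strict Implicit. Unset Printing Implicit Defensive.
Import Order.TTheory GRing.Theory Num.Theory.
Local Open Scope ring_scope.

Section Game.
Variables (R : realDomainType) (S1 S2 : finType).
Variables (u1 u2 : S1 * S2 -> R).

Definition comparable1 (p q : S1 * S2) : bool := (p.2 == q.2) && (p.1 != q.1).
Definition comparable2 (p q : S1 * S2) : bool := (p.1 == q.1) && (p.2 != q.2).

Definition pref_graph : rel (S1 * S2) :=
  fun p q => (comparable1 p q && (u1 p <= u1 q))
          || (comparable2 p q && (u2 p <= u2 q)).

Definition strict_game : Prop :=
  (forall p q, comparable1 p q -> u1 p != u1 q) /\
  (forall p q, comparable2 p q -> u2 p != u2 q).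
End Game.

Definition no_sink (V : finType) (e : rel V) : Prop :=
  forall x : V, exists y : V, e x y.

Definition has_4cycle (V : finType) (e : rel V) : Prop :=
  exists a b c d : V,
    [&& uniq [:: a; b; c; d], e a b, e b c, e c d & e d a].

Definition digraph_iso (V W : finType) (e : rel V) (e' : rel W) : Prop :=
  exists f : V -> W, bijective f /\ forall x y, e x y = e' (f x) (f y).

(* Shapley's 3x3 game (rows r1,r2,r3 = 0,1,2 ; columns c1,c2,c3 = 0,1,2). *)
Definition shapley_u1 (p : 'I_3 * 'I_3) : int :=
  nth 0 (nth [::] [:: [:: 0; 2; 1]; [:: 1; 0; 2]; [:: 2; 1; 0]] p.1) p.2.
Definition shapley_u2 (p : 'I_3 * 'I_3) : int :=
  nth 0 (nth [::] [:: [:: 0; 1; 2]; [:: 2; 0; 1]; [:: 1; 2; 0]] p.1) p.2.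

Definition shapley_graph : rel ('I_3 * 'I_3) := pref_graph shapley_u1 shapley_u2.

From HB Require Import structures.
From mathcomp Require Import all_boot all_order all_algebra.
Set Implicit Arguments.
Unset Strict Implicit.
Unset Printing Implicit Defensive.
Import Order.TTheory GRing.Theory Num.Theory.
Local Open Scope ring_scope.

(* A sink of the preference graph of a strict game is a profile at which each
   strategy is the unique best reply to the other.  Hence the best-reply
   dynamics c |-> br2 (br1 c) on columns (and r |-> br1 (br2 r) on rows) has no
   fixed point.  It has no point of period 2 either: with r = br1 c,
   c' = br2 r and r' = br1 c', the profiles (r', c), (r, c), (r, c'), (r', c')
   would form a 4-cycle unless player 2 strictly prefers c' to c against r',
   so br2 r' <> c.  An orbit thus meets three strategies of each player.  In the
   3 x 3 case the dynamics is a 3-cycle c0 -> c1 -> c2 -> c0, and the same two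
   facts determine both players' rankings in every row and column: they are
   the cyclic rankings of Shapley's game. *)

Section ShortOrbits.
Variables (T : finType) (g : T -> T).
Hypotheses (g_neq : forall x, g x != x) (g2_neq : forall x, g (g x) != x).

Lemma three_le_card_of_point (x : T) : (3 <= #|T|)%N.
Proof.
apply/card_gt2P; exists x, (g x), (g (g x)); split => //.
by rewrite eq_sym g_neq eq_sym g_neq g2_neq.
Qed.

Lemma card3_period3 : #|T| = 3%N -> forall x, g (g (g x)) = x.
Proof.
move=> cardT x; apply/eqP; apply: contraT => g3_neq.
suff : (4 <= #|T|)%N by rewrite cardT.
apply/card_geqP; exists [:: x; g x; g (g x); g (g (g x))]; split => //.
rewrite /= !inE !negb_or ![g (g x) == _]eq_sym ![g x == _]eq_sym.
rewrite ![x == _]eq_sym.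
by rewrite !g_neq !g2_neq g3_neq.
Qed.

End ShortOrbits.

Lemma mem_orbit_I3 (i j : 'I_3) : i \in [:: j; j + 1; j + 1 + 1].
Proof. by case: i j => -[|[|[|//]]] ? [[|[|[|//]]] ?]. Qed.

Lemma addr111_I3 (i : 'I_3) : i + 1 + 1 + 1 = i.
Proof. by rewrite -!addrA (_ : 1 + (1 + 1) = 0) ?addr0 //; apply/val_inj. Qed.

Lemma cyclic3_inj (T : eqType) (f : 'I_3 -> T) :
  (forall i, f (i + 1) != f i) -> (forall i, f (i + 1 + 1) != f i) ->
  injective f.
Proof.
move=> f1_neq f2_neq i i'; have := mem_orbit_I3 i' i.
rewrite !inE => /or3P[]/eqP-> // /esym/eqP.
  by rewrite (negbTE (f1_neq i)).
by rewrite (negbTE (f2_neq i)).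
Qed.

Lemma le_eq_of_cyclic_increasing (R R' : realDomainType)
    (a : 'I_3 -> R) (b : 'I_3 -> R') (j : 'I_3) :
  a j < a (j + 1) < a (j + 1 + 1) -> b j < b (j + 1) < b (j + 1 + 1) ->
  forall i i', (a i <= a i') = (b i <= b i').
Proof.
move=> /andP[a01 a12] /andP[b01 b12] i i'.
have a02 := lt_trans a01 a12; have b02 := lt_trans b01 b12.
move: (mem_orbit_I3 i j) (mem_orbit_I3 i' j); rewrite !inE.
move=> /or3P[]/eqP-> /or3P[]/eqP->;
by rewrite ?lexx ?(ltW a01, ltW a12, ltW a02, ltW b01, ltW b12, ltW b02)
  ?(lt_geF a01, lt_geF a12, lt_geF a02, lt_geF b01, lt_geF b12, lt_geF b02).
Qed.

Definition profiles3 : seq ('I_3 * 'I_3) :=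
  [seq (i, j) | i <- [:: 0; 1; 2], j <- [:: 0; 1; 2]].

Lemma mem_profiles3 (p : 'I_3 * 'I_3) : p \in profiles3.
Proof. by case: p => -[[|[|[|?]]] ?] -[[|[|[|?]]] ?]. Qed.

Lemma shapley_facts :
  strict_game shapley_u1 shapley_u2 /\ no_sink shapley_graph
    /\ ~ has_4cycle shapley_graph.
Proof.
have all_profiles (P : pred ('I_3 * 'I_3)) : all P profiles3 -> forall p, P p.
  by move/allP=> allP p; apply: allP (mem_profiles3 p).
have strict1 : all (fun p => all (fun q =>
  comparable1 p q ==> (shapley_u1 p != shapley_u1 q)) profiles3) profiles3.
  by vm_compute.
have strict2 : all (fun p => all (fun q =>
  comparable2 p q ==> (shapley_u2 p != shapley_u2 q)) profiles3) profiles3.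
  by vm_compute.
have sinkless : all (fun p => has (shapley_graph p) profiles3) profiles3.
  by vm_compute.
have acyclic4 : all (fun a => all (fun b => all (fun c => all (fun d =>
  ~~ [&& uniq [:: a; b; c; d], shapley_graph a b, shapley_graph b c,
         shapley_graph c d & shapley_graph d a])
  profiles3) profiles3) profiles3) profiles3.
  by vm_compute.
split; [split | split].
- by move=> p q; move/all_profiles/(_ p)/all_profiles/(_ q)/implyP: strict1.
- by move=> p q; move/all_profiles/(_ p)/all_profiles/(_ q)/implyP: strict2.
- by move=> p; move/all_profiles/(_ p)/hasP: sinkless => -[q _]; exists q.
- move=> [a [b [c [d cyc]]]]; move: acyclic4.
  move/all_profiles/(_ a)/all_profiles/(_ b)/all_profiles/(_ c).
  by move/all_profiles/(_ d)/negP.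
Qed.

Lemma shapley_u1_cyclic (j : 'I_3) :
  shapley_u1 (j, j) < shapley_u1 (j + 1, j) < shapley_u1 (j + 1 + 1, j).
Proof. by case: j => -[|[|[|//]]]. Qed.

Lemma shapley_u2_cyclic (i : 'I_3) :
  shapley_u2 (i, i) < shapley_u2 (i, i + 1) < shapley_u2 (i, i + 1 + 1).
Proof. by case: i => -[|[|[|//]]]. Qed.

Lemma has_4cycle_square (S1 S2 : finType) (e : rel (S1 * S2)) r r' c c' :
  r != r' -> c != c' ->
  e (r', c) (r, c) -> e (r, c) (r, c') ->
  e (r, c') (r', c') -> e (r', c') (r', c) ->
  has_4cycle e.
Proof.
move=> r_neq c_neq e1 e2 e3 e4; exists (r', c), (r, c), (r, c'), (r', c').
rewrite e1 e2 e3 e4 /= !inE !xpair_eqE !eqxx [r' == r]eq_sym.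
by rewrite (negbTE r_neq) (negbTE c_neq).
Qed.

Lemma digraph_iso_sym (V W : finType) (e : rel V) (e' : rel W) :
  digraph_iso e e' -> digraph_iso e' e.
Proof.
move=> [f [[g fK gK] e_f]]; exists g; split; first by exists f.
by move=> x y; rewrite e_f !gK.
Qed.

Section PreferenceGraph.
Variables (R : realDomainType) (S1 S2 : finType) (u1 u2 : S1 * S2 -> R).

Lemma pref_graph_row r r' c :
  r != r' -> u1 (r, c) <= u1 (r', c) -> pref_graph u1 u2 (r, c) (r', c).
Proof.
by move=> r_neq le_u; rewrite /pref_graph /comparable1 /= eqxx r_neq le_u.
Qed.

Lemma pref_graph_col r c c' :
  c != c' -> u2 (r, c) <= u2 (r, c') -> pref_graph u1 u2 (r, c) (r, c').
Proof.
by move=> c_neq le_u; rewrite /pref_graph /comparable2 /= eqxx c_neq le_u orbT.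
Qed.

Lemma pref_graph_sink (p : S1 * S2) :
  (forall r, r != p.1 -> u1 (r, p.2) < u1 p) ->
  (forall c, c != p.2 -> u2 (p.1, c) < u2 p) ->
  forall q, ~~ pref_graph u1 u2 p q.
Proof.
case: p => r c /= best1 best2 [r' c'].
rewrite /pref_graph /comparable1 /comparable2 /= negb_or.
apply/andP; split; apply/negP => /andP[/andP[/eqP <- neq]].
  by rewrite leNgt best1 // eq_sym.
by rewrite leNgt best2 // eq_sym.
Qed.

Lemma pref_graph_iso (R' : realDomainType) (T1 T2 : finType)
    (v1 v2 : T1 * T2 -> R') (g1 : T1 -> S1) (g2 : T2 -> S2) :
  bijective g1 -> bijective g2 ->
  (forall j i i',
     (v1 (i, j) <= v1 (i', j)) = (u1 (g1 i, g2 j) <= u1 (g1 i', g2 j))) ->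
  (forall i j j',
     (v2 (i, j) <= v2 (i, j')) = (u2 (g1 i, g2 j) <= u2 (g1 i, g2 j'))) ->
  digraph_iso (pref_graph v1 v2) (pref_graph u1 u2).
Proof.
move=> [h1 g1K h1K] [h2 g2K h2K] le1 le2.
exists (fun p => (g1 p.1, g2 p.2)); split.
  exists (fun q => (h1 q.1, h2 q.2)) => -[i j] /=.
    by rewrite g1K g2K.
  by rewrite h1K h2K.
move=> [i j] [i' j']; rewrite /pref_graph /comparable1 /comparable2 /=.
rewrite !(inj_eq (can_inj g1K)) !(inj_eq (can_inj g2K)).
by case: eqVneq => [<-|_]; case: eqVneq => [<-|_]; rewrite /= ?le1 ?le2.
Qed.

End PreferenceGraph.

Section BestReplies.
Variables (R : realDomainType) (S1 S2 : finType) (u1 u2 : S1 * S2 -> R).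
Variables (r_def : S1) (c_def : S2).
Hypothesis strict : strict_game u1 u2.
Hypothesis sinkless : no_sink (pref_graph u1 u2).
Hypothesis square_free : ~ has_4cycle (pref_graph u1 u2).

Definition br1 (c : S2) : S1 := [arg max_(r > r_def) u1 (r, c)]%O.
Definition br2 (r : S1) : S2 := [arg max_(c > c_def) u2 (r, c)]%O.

Definition next_row (r : S1) : S1 := br1 (br2 r).
Definition next_col (c : S2) : S2 := br2 (br1 c).

Lemma br1_max r c : u1 (r, c) <= u1 (br1 c, c).
Proof. by rewrite /br1; case: arg_maxP => // r0 _; apply. Qed.

Lemma br2_max r c : u2 (r, c) <= u2 (r, br2 r).
Proof. by rewrite /br2; case: arg_maxP => // c0 _; apply. Qed.

Lemma br1_lt r c : r != br1 c -> u1 (r, c) < u1 (br1 c, c).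
Proof.
move=> r_neq; rewrite lt_def br1_max andbT; apply: strict.1.
by rewrite /comparable1 /= eqxx eq_sym.
Qed.

Lemma br2_lt r c : c != br2 r -> u2 (r, c) < u2 (r, br2 r).
Proof.
move=> c_neq; rewrite lt_def br2_max andbT; apply: strict.2.
by rewrite /comparable2 /= eqxx eq_sym.
Qed.

Lemma next_row_neq r : next_row r != r.
Proof.
apply/eqP; rewrite /next_row => fixed; have [q] := sinkless (r, br2 r).
apply/negP; apply: pref_graph_sink => /= [r'|c] neq; last exact: br2_lt.
by have := @br1_lt r' (br2 r); rewrite fixed; apply.
Qed.

Lemma next_col_neq c : next_col c != c.
Proof.
apply/eqP; rewrite /next_col => fixed; have [q] := sinkless (br1 c, c).
apply/negP; apply: pref_graph_sink => /= [r|c'] neq; first exact: br1_lt.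
by have := @br2_lt (br1 c) c'; rewrite fixed; apply.
Qed.

Lemma next_col_better c :
  u2 (br1 (next_col c), c) < u2 (br1 (next_col c), next_col c).
Proof.
rewrite ltNge; apply/negP => worse; apply: square_free.
have r_neq : br1 c != br1 (next_col c) by rewrite eq_sym next_row_neq.
have c_neq : c != next_col c by rewrite eq_sym next_col_neq.
apply: (has_4cycle_square r_neq c_neq).
- by apply: pref_graph_row; rewrite 1?eq_sym ?br1_max.
- by apply: pref_graph_col; rewrite ?br2_max.
- by apply: pref_graph_row; rewrite ?br1_max.
- by apply: pref_graph_col; rewrite 1?eq_sym.
Qed.

Lemma next_row_better r :
  u1 (r, br2 (next_row r)) < u1 (next_row r, br2 (next_row r)).
Proof.
rewrite ltNge; apply/negP => worse; apply: square_free.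
have r_neq : next_row r != r by rewrite next_row_neq.
have c_neq : br2 r != br2 (next_row r) by rewrite eq_sym next_col_neq.
apply: (has_4cycle_square r_neq c_neq).
- by apply: pref_graph_row; rewrite 1?eq_sym ?br1_max.
- by apply: pref_graph_col; rewrite ?br2_max.
- by apply: pref_graph_row.
- by apply: pref_graph_col; rewrite 1?eq_sym ?br2_max.
Qed.

Lemma next_col2_neq c : next_col (next_col c) != c.
Proof.
apply/eqP => back; have := next_col_better c.
by rewrite ltNge -[X in _ <= u2 (_, X)]back br2_max.
Qed.

Lemma next_row2_neq r : next_row (next_row r) != r.
Proof.
apply/eqP => back; have := next_row_better r.
by rewrite ltNge -[X in _ <= u1 (X, _)]back br1_max.
Qed.

Lemma three_le_card_rows : (3 <= #|S1|)%N.
Proof. exact: (three_le_card_of_point next_row_neq next_row2_neq r_def). Qed.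

Lemma three_le_card_cols : (3 <= #|S2|)%N.
Proof. exact: (three_le_card_of_point next_col_neq next_col2_neq c_def). Qed.

Section ThreeByThree.
Hypotheses (card_rows : #|S1| = 3%N) (card_cols : #|S2| = 3%N).

Definition cycle_col (j : 'I_3) : S2 := iter j next_col c_def.
(* The shift by one makes the labelling agree with Shapley's game. *)
Definition cycle_row (i : 'I_3) : S1 := br1 (cycle_col (i + 1)).

Lemma cycle_col_succ j : cycle_col (j + 1) = next_col (cycle_col j).
Proof.
have period := card3_period3 next_col_neq next_col2_neq card_cols c_def.
by case: j => -[|[|[|//]]] ? /=; rewrite ?period.
Qed.

Lemma cycle_row_succ i : cycle_row (i + 1) = next_row (cycle_row i).
Proof. by rewrite /cycle_row cycle_col_succ. Qed.

Lemma br1_cycle_col j : br1 (cycle_col j) = cycle_row (j + 1 + 1).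
Proof. by rewrite /cycle_row addr111_I3. Qed.

Lemma br2_cycle_row i : br2 (cycle_row i) = cycle_col (i + 1 + 1).
Proof. by rewrite cycle_col_succ. Qed.

Lemma cycle_u1_increasing j :
  u1 (cycle_row j, cycle_col j) < u1 (cycle_row (j + 1), cycle_col j)
    < u1 (cycle_row (j + 1 + 1), cycle_col j).
Proof.
apply/andP; split.
  have := next_row_better (cycle_row j).
  by rewrite -cycle_row_succ br2_cycle_row addr111_I3.
rewrite -br1_cycle_col; apply: br1_lt.
by rewrite br1_cycle_col (cycle_row_succ (j + 1)) eq_sym next_row_neq.
Qed.

Lemma cycle_u2_increasing i :
  u2 (cycle_row i, cycle_col i) < u2 (cycle_row i, cycle_col (i + 1))
    < u2 (cycle_row i, cycle_col (i + 1 + 1)).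
Proof.
apply/andP; split.
  by have := next_col_better (cycle_col i); rewrite -cycle_col_succ.
rewrite -br2_cycle_row; apply: br2_lt.
by rewrite br2_cycle_row (cycle_col_succ (i + 1)) eq_sym next_col_neq.
Qed.

Lemma shapley_iso_pref_graph : digraph_iso shapley_graph (pref_graph u1 u2).
Proof.
have bij_row : bijective cycle_row.
  apply: inj_card_bij; last by rewrite card_rows card_ord.
  apply: cyclic3_inj => i; rewrite !cycle_row_succ.
    exact: next_row_neq.
  exact: next_row2_neq.
have bij_col : bijective cycle_col.
  apply: inj_card_bij; last by rewrite card_cols card_ord.
  apply: cyclic3_inj => j; rewrite !cycle_col_succ.
    exact: next_col_neq.
  exact: next_col2_neq.
apply: pref_graph_iso bij_row bij_col _ _ => [j | i].
  exact: (le_eq_of_cyclic_increasing (a := fun i => shapley_u1 (i, j))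
            (b := fun i => u1 (cycle_row i, cycle_col j))
            (shapley_u1_cyclic j) (cycle_u1_increasing j)).
exact: (le_eq_of_cyclic_increasing (a := fun j => shapley_u2 (i, j))
          (b := fun j => u2 (cycle_row i, cycle_col j))
          (shapley_u2_cyclic i) (cycle_u2_increasing i)).
Qed.

End ThreeByThree.

End BestReplies.

Theorem mainTheorem1 (R : realDomainType) (S1 S2 : finType)
    (u1 u2 : S1 * S2 -> R)
    (hS1 : (0 < #|S1|)%N) (hS2 : (0 < #|S2|)%N)
    (hstrict : strict_game u1 u2)
    (hsink : no_sink (pref_graph u1 u2))
    (hcyc : ~ has_4cycle (pref_graph u1 u2)) :
  [/\ (3 <= #|S1|)%N, (3 <= #|S2|)%N,
      (#|S1| = 3%N -> #|S2| = 3%N ->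
         digraph_iso (pref_graph u1 u2) shapley_graph)
    & (strict_game shapley_u1 shapley_u2 /\ no_sink shapley_graph
       /\ ~ has_4cycle shapley_graph)].
Proof.
case/card_gt0P: hS1 => r0 _; case/card_gt0P: hS2 => c0 _.
split.
- exact: three_le_card_rows r0 c0 hstrict hsink hcyc.
- exact: three_le_card_cols r0 c0 hstrict hsink hcyc.
- move=> card_rows card_cols; apply: digraph_iso_sym.
  exact: shapley_iso_pref_graph r0 c0 hstrict hsink hcyc card_rows card_cols.
- exact: shapley_facts.
Qed.
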